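(* Consider a port-Hamiltonian descriptor system $(E,J,R,Q,B)$ with $A=(J-R)Q$, $C=B^\top Q$, $(E,A)$ regular, $(E,A,B)$ strongly stabilizable and $(E,A,C)$ strongly detectable, and let $\mathcal P_{\mathrm c},\mathcal P_{\mathrm f}$ be stabilizing solutions of (GC), (GF) such that $I_n+\mathcal P_{\mathrm f}\mathcal P_{\mathrm c}^\top$ is invertible. Let $A_{\mathcal P_{\mathrm c}}=A-BB^\top\mathcal P_{\mathrm c}$ and $\mathcal L=(I_n+\mathcal P_{\mathrm f}\mathcal P_{\mathrm c}^\top)^{-1}\mathcal P_{\mathrm f}$. Then $A_{\mathcal P_{\mathrm c}}\mathcal L^\top+\mathcal LA_{\mathcal P_{\mathrm c}}^\top+BB^\top\preceq0$, $E\mathcal L^\top=\mathcal LE^\top$, $A_{\mathcal P_{\mathrm c}}^\top\mathcal P_{\mathrm c}+\mathcal P_{\mathrm c}^\top A_{\mathcal P_{\mathrm c}}+\begin{bmatrix}-\mathcal P_{\mathrm c}^\top B & C^\top\end{bmatrix}\begin{bmatrix}-\mathcal P_{\mathrm c}^\top B & C^\top\end{bmatrix}^\top=0$, $E^\top\mathcal P_{\mathrm c}=\mathcal P_{\mathrm c}^\top E$.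
   Context: A pH descriptor system: $E,J,R,Q\in\mathbb{R}^{n\times n}$, $B\in\mathbb{R}^{n\times m}$, $E^\top Q=Q^\top E\succeq0$, $J^\top=-J$, $R=R^\top\succeq0$, $A:=(J-R)Q$, $C:=B^\top Q$. Regular pencil: $\det(sE-A)\ne0$ for some $s$; impulse-free: nilpotent part of Weierstraß form vanishes. $(E,A,B)$ strongly stabilizable: $\mathrm{rank}[E\ \ AS\ \ B]=n$ ($\mathrm{im}\,S=\ker E$) and $\mathrm{rank}[\lambda E-A\ \ B]=n$ for $\mathrm{Re}\,\lambda\ge0$; $(E,A,C)$ strongly detectable: $(E^\top,A^\top,C^\top)$ strongly stabilizable. GAREs: (GC) $A^\top\mathcal P_{\mathrm c}+\mathcal P_{\mathrm c}^\top A-\mathcal P_{\mathrm c}^\top BB^\top\mathcal P_{\mathrm c}+C^\top C=0$, $E^\top\mathcal P_{\mathrm c}=\mathcal P_{\mathrm c}^\top E$; (GF) $A\mathcal P_{\mathrm f}^\top+\mathcal P_{\mathrm f}A^\top-\mathcal P_{\mathrm f}C^\top C\mathcal P_{\mathrm f}^\top+BB^\top+2R=0$, $E\mathcal P_{\mathrm f}^\top=\mathcal P_{\mathrm f}E^\top$. Stabilizing: $(E,A-BB^\top\mathcal P_{\mathrm c})$, resp. $(E,A-\mathcal P_{\mathrm f}C^\top C)$, regular, impulse-free with all finite eigenvalues in the open left half-plane. *)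

From HB Require Import structures.
From mathcomp Require Import all_boot all_order all_algebra.
From mathcomp Require Import complex.
Set Implicit Arguments. Unset Strict Implicit. Unset Printing Implicit Defensive.
Import Order.TTheory GRing.Theory Num.Theory.
Local Open Scope ring_scope.

Section PHDefs.
Variable R : rcfType.

Definition cmx {m n} (M : 'M[R]_(m, n)) : 'M[R[i]]_(m, n) :=
  map_mx (fun x => (x%:C)%C) M.

Definition psd {n} (M : 'M[R]_n) : Prop :=
  M^T = M /\ forall x : 'cV[R]_n, 0 <= (x^T *m M *m x) 0 0.

Definition nsd {n} (M : 'M[R]_n) : Prop := psd (- M).

Definition pH_descriptor {n m} (E J Rm Q : 'M[R]_n) (B : 'M[R]_(n, m)) : Prop :=
  E^T *m Q = Q^T *m E /\ psd (E^T *m Q) /\ J^T = - J /\ psd Rm.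

Definition pH_A {n} (J Rm Q : 'M[R]_n) : 'M[R]_n := (J - Rm) *m Q.
Definition pH_C {n m} (Q : 'M[R]_n) (B : 'M[R]_(n, m)) : 'M[R]_(m, n) := B^T *m Q.

Definition regular_pencil {n} (E A : 'M[R]_n) : Prop :=
  exists s : R[i], \det (s *: cmx E - cmx A) != 0.

(* impulse-free: a (quasi-)Weierstrass form W (sE - A) T =
   diag(sI_r - J, sN - I_k) exists whose nilpotent part N vanishes. *)
Definition impulse_free {n} (E A : 'M[R]_n) : Prop :=
  exists r k (h : (r + k = n)%N) (W T : 'M[R]_n) (Jf : 'M[R]_r),
    [/\ W \in unitmx, T \in unitmx,
        W *m E *m T = castmx (h, h) (block_mx 1%:M 0 0 0) &
        W *m A *m T = castmx (h, h) (block_mx Jf 0 0 1%:M)].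

Definition finite_eig {n} (E A : 'M[R]_n) (l : R[i]) : Prop :=
  \det (l *: cmx E - cmx A) = 0.

(* strongly stabilizable: rank [E AS B] = n with im S = ker E, and
   rank [lE - A  B] = n for Re l >= 0.  S is taken as the matrix whose
   columns are the rows of kermx E^T, i.e. a basis-spanning family of ker E. *)
Definition strongly_stabilizable {n m} (E A : 'M[R]_n) (B : 'M[R]_(n, m)) : Prop :=
  let S := (kermx E^T)^T in
  \rank (row_mx (row_mx E (A *m S)) B) = n /\
  forall l : R[i], 0 <= complex.Re l ->
    \rank (row_mx (l *: cmx E - cmx A) (cmx B)) = n.

Definition strongly_detectable {n m} (E A : 'M[R]_n) (C : 'M[R]_(m, n)) : Prop :=
  strongly_stabilizable E^T A^T C^T.

Definition stable_pencil {n} (E Acl : 'M[R]_n) : Prop :=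
  [/\ regular_pencil E Acl, impulse_free E Acl &
      forall l : R[i], finite_eig E Acl l -> complex.Re l < 0].

Definition stab_GC {n m} (E A : 'M[R]_n) (B : 'M[R]_(n, m)) (C : 'M[R]_(m, n))
    (Pc : 'M[R]_n) : Prop :=
  [/\ A^T *m Pc + Pc^T *m A - Pc^T *m B *m B^T *m Pc + C^T *m C = 0,
      E^T *m Pc = Pc^T *m E &
      stable_pencil E (A - B *m B^T *m Pc)].

Definition stab_GF {n m} (E A Rm : 'M[R]_n) (B : 'M[R]_(n, m)) (C : 'M[R]_(m, n))
    (Pf : 'M[R]_n) : Prop :=
  [/\ A *m Pf^T + Pf *m A^T - Pf *m C^T *m C *m Pf^T + B *m B^T + 2%:R *: Rm = 0,
      E *m Pf^T = Pf *m E^T &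
      stable_pencil E (A - Pf *m C^T *m C)].

End PHDefs.

From HB Require Import structures.
From mathcomp Require Import all_boot all_order all_algebra.
From mathcomp Require Import complex ring.
Set Implicit Arguments. Unset Strict Implicit. Unset Printing Implicit Defensive.
Import Order.TTheory GRing.Theory Num.Theory.
Local Open Scope ring_scope.

(* With X := I + Pf Pc^T and L = X^-1 Pf, the congruence X (.) X^T turns the
   Lyapunov expression of the closed loop into the sum of the (GF) residual,
   Pf times the (GC) residual times Pf^T, and -2 R. Both residuals vanish,
   so the expression is congruent to -2 R, which is negative semidefinite.
   The same congruence, together with the symmetry conditions of (GC) and
   (GF), gives E L^T = L E^T; the last identity is (GC) rewritten in
   closed-loop form. *)

Section EntrywiseRing.
Variable R : comPzRingType.

Lemma mx_addE m n (A B : 'M[R]_(m, n)) i j : (A + B) i j = A i j + B i j.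
Proof. by rewrite mxE. Qed.

Lemma mx_oppE m n (A : 'M[R]_(m, n)) i j : (- A) i j = - A i j.
Proof. by rewrite mxE. Qed.

Lemma mx_scaleE m n (a : R) (A : 'M[R]_(m, n)) i j : (a *: A) i j = a * A i j.
Proof. by rewrite mxE. Qed.

End EntrywiseRing.

(* After full distribution every matrix product is an opaque atom, so the
   remaining identity holds entrywise in a commutative group. *)
Ltac mx_ring := rewrite ?(raddfD, raddfB, raddfN) /= ?trmx_mul ?trmxK ?trmx1;
  rewrite !(mulmxDl, mulmxDr, mulmxBl, mulmxBr, mulNmx, mulmxN, mul1mx, mulmx1,
            mulmxA);
  apply/matrixP => i j; rewrite !(mx_addE, mx_oppE, mx_scaleE); ring.

Section RiccatiIdentities.
Variables (R : comPzRingType) (n m : nat).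
Implicit Types (A F P Rm : 'M[R]_n) (B : 'M[R]_(n, m)) (C : 'M[R]_(m, n)).

Lemma riccati_closed_loop A B C P :
  let M := row_mx (- (P^T *m B)) C^T in
  (A - B *m B^T *m P)^T *m P + P^T *m (A - B *m B^T *m P) + M *m M^T =
  A^T *m P + P^T *m A - P^T *m B *m B^T *m P + C^T *m C.
Proof. by rewrite /= tr_row_mx mul_row_col; mx_ring. Qed.

Lemma lyapunov_congr_riccati A F P Rm B C :
  let X := 1%:M + F *m P^T in
  let AP := A - B *m B^T *m P in
  X *m AP *m F^T + F *m AP^T *m X^T + X *m (B *m B^T) *m X^T =
  (A *m F^T + F *m A^T - F *m C^T *m C *m F^T + B *m B^T + 2%:R *: Rm)
  + F *m (A^T *m P + P^T *m A - P^T *m B *m B^T *m P + C^T *m C) *m F^T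
  - 2%:R *: Rm.
Proof. by rewrite /=; mx_ring. Qed.

Lemma descriptor_congr_symmetric (E F P : 'M[R]_n) :
  E^T *m P = P^T *m E -> E *m F^T = F *m E^T ->
  (1%:M + F *m P^T) *m E *m F^T = F *m E^T *m (1%:M + F *m P^T)^T.
Proof.
move=> EP EF; rewrite raddfD /= trmx1 trmx_mul trmxK.
rewrite !mulmxDl !mulmxDr mul1mx mulmx1 EF; congr (_ + _).
by rewrite -(mulmxA F) -EP !mulmxA.
Qed.

End RiccatiIdentities.

Section Congruence.
Variables (R : comUnitRingType) (n : nat) (X : 'M[R]_n).
Hypothesis X_unit : X \in unitmx.

Lemma congr_unitmxK (N : 'M[R]_n) : invmx X *m (X *m N *m X^T) *m (invmx X)^T = N.
Proof.
by rewrite trmx_inv !mulmxA mulVmx // mul1mx -mulmxA mulmxV ?unitmx_tr ?mulmx1.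
Qed.

Lemma congr_unitmx_inj (M N : 'M[R]_n) :
  X *m M *m X^T = X *m N *m X^T -> M = N.
Proof. by move=> eMN; rewrite -[M]congr_unitmxK eMN congr_unitmxK. Qed.

Lemma congr_gain_trl (F N : 'M[R]_n) :
  X *m (N *m (invmx X *m F)^T) *m X^T = X *m N *m F^T.
Proof.
by rewrite trmx_mul trmx_inv !mulmxA -(mulmxA _ (invmx _)) mulVmx ?unitmx_tr ?mulmx1.
Qed.

Lemma congr_gain_mull (F N : 'M[R]_n) :
  X *m (invmx X *m F *m N) *m X^T = F *m N *m X^T.
Proof. by rewrite !mulmxA mulmxV // mul1mx. Qed.

Lemma congr_gain_lyapunov (F S K : 'M[R]_n) :
  let L := invmx X *m F in
  X *m (S *m L^T + L *m S^T + K) *m X^T =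
  X *m S *m F^T + F *m S^T *m X^T + X *m K *m X^T.
Proof. by rewrite /= !mulmxDr !mulmxDl congr_gain_trl congr_gain_mull. Qed.

End Congruence.

Section Semidefinite.
Variables (R : rcfType) (n : nat).

Lemma psd_congr (S M : 'M[R]_n) : psd M -> psd (S *m M *m S^T).
Proof.
case=> M_sym M_nneg; split; first by rewrite !trmx_mul trmxK M_sym mulmxA.
by move=> x; have := M_nneg (S^T *m x); rewrite trmx_mul trmxK !mulmxA.
Qed.

Lemma nsd_congr (S N : 'M[R]_n) : nsd N -> nsd (S *m N *m S^T).
Proof. by rewrite /nsd -mulNmx -mulmxN; apply: psd_congr. Qed.

Lemma psd_scale (a : R) (M : 'M[R]_n) : 0 <= a -> psd M -> psd (a *: M).
Proof.
move=> a_ge0 [M_sym M_nneg]; split; first by rewrite linearZ /= M_sym.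
by move=> x; rewrite -scalemxAr -scalemxAl mx_scaleE mulr_ge0.
Qed.

End Semidefinite.

Theorem mainTheorem10 (R : rcfType) (n m : nat)
    (E J Rm Q : 'M[R]_n) (B : 'M[R]_(n, m)) (Pc Pf : 'M[R]_n) :
  pH_descriptor E J Rm Q B ->
  regular_pencil E (pH_A J Rm Q) ->
  strongly_stabilizable E (pH_A J Rm Q) B ->
  strongly_detectable E (pH_A J Rm Q) (pH_C Q B) ->
  stab_GC E (pH_A J Rm Q) B (pH_C Q B) Pc ->
  stab_GF E (pH_A J Rm Q) Rm B (pH_C Q B) Pf ->
  (1%:M + Pf *m Pc^T) \in unitmx ->
  let A := pH_A J Rm Q in
  let C := pH_C Q B in
  let APc := A - B *m B^T *m Pc in
  let L := invmx (1%:M + Pf *m Pc^T) *m Pf in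
  let M := row_mx (- (Pc^T *m B)) C^T in
  [/\ nsd (APc *m L^T + L *m APc^T + B *m B^T),
      E *m L^T = L *m E^T,
      APc^T *m Pc + Pc^T *m APc + M *m M^T = 0 &
      E^T *m Pc = Pc^T *m E].
Proof.
move=> [_ [_ [_ Rm_psd]]] _ _ _ [GC EPc _] [GF EPf _] X_unit A C APc L M.
set X := 1%:M + Pf *m Pc^T in X_unit L *.
split=> //.
- rewrite -(congr_unitmxK X_unit (_ + _)) congr_gain_lyapunov //.
  rewrite (lyapunov_congr_riccati A Pf Pc Rm B C).
  rewrite -/A GC GF mulmx0 mul0mx add0r sub0r.
  by apply: nsd_congr; rewrite /nsd opprK; apply: psd_scale.
- apply: (congr_unitmx_inj X_unit).
  by rewrite congr_gain_trl ?congr_gain_mull // descriptor_congr_symmetric.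
- by rewrite riccati_closed_loop.
Qed.
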